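(* Let $(A_1,\lambda_1)\in\Lambda^*_{2,p}$, let $\varphi:(A_1,\lambda_1)\to(A,\lambda)$ be a degree-$p$ isogeny onto a principally polarized abelian surface with $\varphi^*\lambda=\lambda_1$, corresponding to $\xi\in\mathbf P^1(k)$ with $\xi\notin\mathbf P^1(\mathbb F_{p^2})$, and let $M$ (with $VN\subset M\subset N$) be the covariant Dieudonné module of $A$. Then $\ker\pi\subset U_x$, where $U_x=\{\phi\in U_{x_1}:\phi(M)=M\}$.
   Context: $k$ is algebraically closed of characteristic $p$, $W=W(k)$. $\Lambda^*_{2,p}$ is the set of isomorphism classes of polarized superspecial abelian surfaces $(A_1,\lambda_1)$ over $k$ with $\deg\lambda_1=p^2$ and $\ker\lambda_1\simeq\alpha_p\times\alpha_p$. Let $(M_1,\langle\,,\rangle)$ be the covariant Dieudonné module of $A_1$ with pairing from $\lambda_1$, $N\subset M_1\otimes\mathbb Q$ with $VN=M_1$, $\langle\,,\rangle_N=p\langle\,,\rangle$, and $U_{x_1}=\mathrm{Aut}_{\mathcal{DM}}(N,\langle\,,\rangle_N)$ (automorphisms commuting with $F,V$ preserving the pairing). There is a $W$-basis $e_1,\dots,e_4$ of $N$ with $Fe_1=e_2,Fe_2=-pe_1,Fe_3=e_4,Fe_4=-pe_3$, $\langle e_1,e_3\rangle_N=1$, $\langle e_2,e_4\rangle_N=p$ (other pairings of basis vectors zero up to antisymmetry). $\tilde N$ is the $W(\mathbb F_{p^2})$-span of the $e_i$, $V_0=\tilde N/V\tilde N=\mathbb F_{p^2}\bar e_1\oplus\mathbb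 F_{p^2}\bar e_3$ with induced pairing, and $\pi:U_{x_1}\to\mathrm{Aut}(V_0,\langle\,,\rangle)=\mathrm{SL}_2(\mathbb F_{p^2})$ is the induced homomorphism. Via $\varphi_*$, $M_1\subset M$, and $M=VN+Wv$ with $v=a'e_1+b'e_3$, where $\xi=[a:b]$ (coordinates with respect to $\bar e_1,\bar e_3$) and $a',b'\in W$ lift $a,b$. *)

From HB Require Import structures.
From mathcomp Require Import all_boot all_order all_algebra.
Set Implicit Arguments. Unset Strict Implicit. Unset Printing Implicit Defensive.
Import GRing.Theory.
Local Open Scope ring_scope.

(* N is modelled as the free W-module 'cV[W]_4 with standard basis e_1..e_4
   (indices 0..3).  sigma is the Frobenius of W = W(k), sigma_inv its inverse. *)

Section Dieudonne.
Variables (W : comUnitRingType) (p : nat).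

(* matrix of F in the basis e_i : F e1 = e2, F e2 = -p e1, F e3 = e4, F e4 = -p e3 *)
Definition Fmat : 'M[W]_4 := \matrix_(i < 4, j < 4)
  match (nat_of_ord i, nat_of_ord j) with
  | (1, 0)%N => 1 | (0, 1)%N => - (p%:R) | (3, 2)%N => 1 | (2, 3)%N => - (p%:R)
  | _ => 0 end.

(* matrix of V (the unique operator with FV = VF = p):
   V e1 = -e2, V e2 = p e1, V e3 = -e4, V e4 = p e3 *)
Definition Vmat : 'M[W]_4 := \matrix_(i < 4, j < 4)
  match (nat_of_ord i, nat_of_ord j) with
  | (1, 0)%N => -1 | (0, 1)%N => p%:R | (3, 2)%N => -1 | (2, 3)%N => p%:R
  | _ => 0 end.

(* Gram matrix of <,>_N : <e1,e3> = 1, <e2,e4> = p, alternating *)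
Definition Jmat : 'M[W]_4 := \matrix_(i < 4, j < 4)
  match (nat_of_ord i, nat_of_ord j) with
  | (0, 2)%N => 1 | (2, 0)%N => -1 | (1, 3)%N => p%:R | (3, 1)%N => - (p%:R)
  | _ => 0 end.

Variables (sigma sigma_inv : W -> W).

Definition Fop (x : 'cV[W]_4) : 'cV[W]_4 := Fmat *m map_mx sigma x.
Definition Vop (x : 'cV[W]_4) : 'cV[W]_4 := Vmat *m map_mx sigma_inv x.

Definition pairingN (x y : 'cV[W]_4) : W := (x^T *m Jmat *m y) 0 0.

(* W(F_{p^2}) inside W(k): the elements fixed by sigma^2 *)
Definition inWFp2 (a : W) : Prop := sigma (sigma a) = a.

(* a lies in pW, i.e. reduces to 0 in k = W/pW *)
Definition in_pW (a : W) : Prop := exists c, a = p%:R * c.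

(* \tilde N : the W(F_{p^2})-span of the e_i *)
Definition Ntilde (x : 'cV[W]_4) : Prop := forall i, inWFp2 (x i 0).
Definition VNtilde (x : 'cV[W]_4) : Prop := exists z, Ntilde z /\ x = Vop z.

(* phi = (x |-> P *m x) belongs to U_{x_1} = Aut_DM(N, <,>_N) *)
Definition in_U (P : 'M[W]_4) : Prop :=
  [/\ P \in unitmx,
      (forall x, P *m Fop x = Fop (P *m x)),
      (forall x, P *m Vop x = Vop (P *m x)) &
      (forall x y, pairingN (P *m x) (P *m y) = pairingN x y)].

(* phi in ker pi : phi induces the identity on V_0 = \tilde N / V \tilde N *)
Definition in_ker_pi (P : 'M[W]_4) : Prop :=
  in_U P /\ (forall x, Ntilde x -> Ntilde (P *m x) /\ VNtilde (P *m x - x)).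

(* M = VN + W v, v = a' e1 + b' e3 *)
Definition vvec (a' b' : W) : 'cV[W]_4 := \col_(i < 4)
  match nat_of_ord i with 0%N => a' | 2%N => b' | _ => 0 end.
Definition inM (a' b' : W) (y : 'cV[W]_4) : Prop :=
  exists (z : 'cV[W]_4) (c : W), y = Vop z + c *: vvec a' b'.

Definition in_Ux (a' b' : W) (P : 'M[W]_4) : Prop :=
  [/\ in_U P,
      (forall y, inM a' b' y -> inM a' b' (P *m y)) &
      (forall y, inM a' b' y -> exists z, inM a' b' z /\ P *m z = y)].

End Dieudonne.

From HB Require Import structures.
From mathcomp Require Import all_boot all_order all_algebra.
Set Implicit Arguments. Unset Strict Implicit. Unset Printing Implicit Defensive.
Import GRing.Theory.
Local Open Scope ring_scope.

(* An automorphism phi of (N, F, V) commutes with V, so it preserves VN.  If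
   moreover phi lies in ker pi, it fixes e_1 and e_3 modulo VN, hence fixes
   v = a' e_1 + b' e_3 modulo VN and maps M = VN + Wv into itself.  Its inverse
   has the same two properties, so phi(M) = M.  No hypothesis on xi is needed. *)

Section ModuloVN.
Variables (W : comUnitRingType) (p : nat).
Variables (sigma : {rmorphism W -> W}) (sigma_inv : W -> W).
Hypotheses (sigmaK : cancel sigma sigma_inv) (sigma_invK : cancel sigma_inv sigma).

HB.instance Definition _ :=
  GRing.isZmodMorphism.Build W W sigma_inv (can2_zmod_morphism sigmaK sigma_invK).
HB.instance Definition _ :=
  GRing.isMonoidMorphism.Build W W sigma_inv (can2_monoid_morphism sigmaK sigma_invK).

Local Notation V := (Vop p sigma_inv).

Lemma VopD x y : V (x + y) = V x + V y.
Proof. by rewrite /Vop map_mxD mulmxDr. Qed.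

Lemma VopZ c x : V (sigma c *: x) = c *: V x.
Proof. by rewrite /Vop map_mxZ scalemxAr [in LHS]/= sigmaK. Qed.

Definition in_VN (x : 'cV[W]_4) : Prop := exists z, x = V z.

Lemma in_VND x y : in_VN x -> in_VN y -> in_VN (x + y).
Proof. by move=> [z ->] [w ->]; exists (z + w); rewrite VopD. Qed.

Lemma in_VNZ c x : in_VN x -> in_VN (c *: x).
Proof. by move=> [z ->]; exists (sigma c *: z); rewrite VopZ. Qed.

Definition commute_V (Q : 'M[W]_4) : Prop := forall x, Q *m V x = V (Q *m x).

Lemma in_VN_mulmx Q x : commute_V Q -> in_VN x -> in_VN (Q *m x).
Proof. by move=> QV [z ->]; exists (Q *m z); rewrite QV. Qed.

Lemma commute_V_invmx Q : Q \in unitmx -> commute_V Q -> commute_V (invmx Q).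
Proof. by move=> Qu QV x; rewrite -{1}(mulKVmx Qu x) -QV mulKmx. Qed.

Lemma in_VN_invmx_sub Q x :
  Q \in unitmx -> commute_V Q -> in_VN (Q *m x - x) -> in_VN (invmx Q *m x - x).
Proof.
move=> Qu QV /(in_VN_mulmx (commute_V_invmx Qu QV)) /(in_VNZ (-1)).
by rewrite mulmxBr mulKmx // scaleN1r opprB.
Qed.

Definition basis_vec (i : 'I_4) : 'cV[W]_4 := delta_mx i 0.

Lemma vvecE a' b' : vvec a' b' = a' *: basis_vec 0 + b' *: basis_vec 2%:R.
Proof.
apply/matrixP => i j; rewrite !mxE (ord1 j).
by case: i => [[|[|[|[|i]]]] Hi] //=; rewrite ?mulr1 ?mulr0 ?addr0 ?add0r.
Qed.

Lemma inM_mulmx a' b' Q y :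
  commute_V Q ->
  in_VN (Q *m basis_vec 0 - basis_vec 0) ->
  in_VN (Q *m basis_vec 2%:R - basis_vec 2%:R) ->
  inM p sigma_inv a' b' y -> inM p sigma_inv a' b' (Q *m y).
Proof.
move=> QV Qe1 Qe3 [z [c ->]].
have [w Qv] : in_VN (Q *m vvec a' b' - vvec a' b').
  rewrite vvecE mulmxDr -!scalemxAr opprD addrACA -!scalerBr.
  by apply: in_VND; apply: in_VNZ.
exists (Q *m z + sigma c *: w), c.
by rewrite mulmxDr -scalemxAr QV VopD VopZ -Qv scalerBr -addrA subrK.
Qed.

Lemma ker_pi_basis_vec i P :
  in_ker_pi p sigma sigma_inv P -> in_VN (P *m basis_vec i - basis_vec i).
Proof.
move=> [_ Pk].
have e_i : Ntilde sigma (basis_vec i) by move=> j; rewrite /inWFp2 !mxE !rmorph_nat.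
by have [_ [z [_ ->]]] := Pk _ e_i; exists z.
Qed.

End ModuloVN.

Theorem lemma4p2 (W : comUnitRingType) (p : nat) (hp : prime p)
  (sigma : {rmorphism W -> W}) (sigma_inv : W -> W)
  (hs1 : cancel sigma sigma_inv) (hs2 : cancel sigma_inv sigma)
  (a' b' : W)
  (hxi : ~ (in_pW p a' /\ in_pW p b'))
  (hnotFp2 : ~ (exists c d : W, inWFp2 sigma c /\ inWFp2 sigma d /\
                  ~ (in_pW p c /\ in_pW p d) /\ in_pW p (a' * d - b' * c))) :
  forall P : 'M[W]_4, in_ker_pi p sigma sigma_inv P -> in_Ux p sigma sigma_inv a' b' P.
Proof.
move=> P Pker; have [[Pu _ PV _] _] := Pker.
have Pe i := ker_pi_basis_vec i Pker.
have P'V := commute_V_invmx Pu PV.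
have P'e i := in_VN_invmx_sub hs1 hs2 Pu PV (Pe i).
split; first by case: Pker.
- by move=> y /(inM_mulmx hs1 hs2 PV (Pe 0) (Pe 2%:R)).
- move=> y /(inM_mulmx hs1 hs2 P'V (P'e 0) (P'e 2%:R)) My.
  by exists (invmx P *m y); rewrite mulKVmx.
Qed.
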